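(* Let $\epsilon>0$, $n\ge1$, $s=\sqrt{e^\epsilon}$, let $\mathbf{w}\in\mathbb{R}^d$ be non-increasing, $c\in\mathbb{R}$, and $\mathbf{m}$ with $m_j\ge0$, $\sum_jm_j=1$. Let $J=\{j: m_j>0\}$ and for $j\in J$ put $K_j=\frac{w_j-c}{m_j}$, $t_j=\big|\frac{s}{s-1}K_j+c\big|$, $f_j=\big|\frac{-1}{s-1}K_j+c\big|$, and for $b\in\{0,1\}$, $g_{j,b}=\frac{bs-(1-b)}{s-1}K_j$. For the weighted sampling mechanism with parameters $(\epsilon,\mathbf{w},\mathbf{m},c)$: $$\mathrm{risk}_{\mathrm{MM}}=\frac dn\max_{j\in J}\max(f_j,t_j),\qquad \mathrm{risk}_{\mathrm{EM}}=\frac{\sum_{j\in J}m_j\big[(s+d-1)t_j+(s(d-1)+1)f_j\big]}{n(s+1)}\ \text{(for every input vote)},$$ $$\mathrm{risk}_{\mathrm{DD}}=d\Big(\max_{j\in J,\,b\in\{0,1\}}g_{j,b}-\min_{j\in J,\,b\in\{0,1\}}g_{j,b}\Big).$$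
   Context: Candidates are $A_1,\dots,A_d$; a vote $\pi$ is a linear ordering, $\pi_j$ the index of the candidate at rank $j$; the scored vote is $v$ with $v_{\pi_j}=w_j$. The weighted sampling mechanism on input $\pi$: (1) samples a rank $j^*$ with $\Pr[j^*=j]=m_j$, independently of $\pi$; (2) sets $B\in\{0,1\}^d$ with $B_{\pi_{j^*}}=1$, other entries $0$; (3) independently for each $k$, sets $\tilde B_k=1-B_k$ with probability $\frac1{s+1}$, else $\tilde B_k=B_k$; (4) outputs $\tilde v_k=\frac{(s+1)\tilde B_k-1}{s-1}\cdot\frac{w_{j^*}-c}{m_{j^*}}+c$. Let $\mathcal{D}_{\tilde v}$ be the set of all possible outputs (over all inputs and all randomness), $n$ the number of voters. Risk metrics: $\mathrm{risk}_{\mathrm{MM}}=\max_{\tilde v\in\mathcal{D}_{\tilde v}}\frac{|\tilde v|_1}{n}$; $\mathrm{risk}_{\mathrm{EM}}=\mathbb{E}[\frac{|\tilde v|_1}{n}]$ over the mechanism's randomness for a given input; $\mathrm{risk}_{\mathrm{DD}}=\max_{\tilde v,\tilde v'\in\mathcal{D}_{\tilde v}}|\tilde v-\tilde v'|_1$. *)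

From HB Require Import structures.
From mathcomp Require Import all_boot all_order all_algebra perm.
From mathcomp Require Import reals sequences exp.
Set Implicit Arguments. Unset Strict Implicit. Unset Printing Implicit Defensive.
Import Order.TTheory GRing.Theory Num.Theory.
Local Open Scope ring_scope.

Section WS.
Variables (R : realType) (d : nat).

Definition is_max (S : R -> Prop) (x : R) := S x /\ forall y, S y -> y <= x.
Definition is_min (S : R -> Prop) (x : R) := S x /\ forall y, S y -> x <= y.

Definition sparam (eps : R) : R := Num.sqrt (expR eps).

Definition l1 (v : 'I_d -> R) : R := \sum_k `|v k|.

Variables (eps : R) (w m : 'I_d -> R) (c : R).
Let s := sparam eps.

(* Ranks and candidates are both indexed by 'I_d; a vote pi maps rank j to
   candidate pi j. An outcome of the mechanism is (j*, B~). *)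

(* probability that coordinate with true bit b is reported as bt *)
Definition flipprob (b bt : bool) : R :=
  if bt == b then s / (s + 1) else 1 / (s + 1).

(* probability of outcome (j, Bt) on input vote pi; B_k = (k == pi j) *)
Definition outprob (pi : {perm 'I_d}) (j : 'I_d) (Bt : {ffun 'I_d -> bool}) : R :=
  m j * \prod_k flipprob (k == pi j) (Bt k).

Definition output (j : 'I_d) (Bt : {ffun 'I_d -> bool}) : 'I_d -> R :=
  fun k => ((s + 1) * (nat_of_bool (Bt k))%:R - 1) / (s - 1) * ((w j - c) / m j) + c.

Definition possible_output (v : 'I_d -> R) : Prop :=
  exists pi j Bt, 0 < outprob pi j Bt /\ v = output j Bt.

(* risk_MM is the maximum of this set *)
Definition riskMM_set (n : nat) (x : R) : Prop :=
  exists v, possible_output v /\ x = l1 v / n%:R.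

Definition riskEM (n : nat) (pi : {perm 'I_d}) : R :=
  \sum_j \sum_(Bt : {ffun 'I_d -> bool}) outprob pi j Bt * (l1 (output j Bt) / n%:R).

(* risk_DD is the maximum of this set *)
Definition riskDD_set (x : R) : Prop :=
  exists v v', possible_output v /\ possible_output v' /\ x = l1 (fun k => v k - v' k).

Definition Kj (j : 'I_d) : R := (w j - c) / m j.
Definition tj (j : 'I_d) : R := `| s / (s - 1) * Kj j + c |.
Definition fj (j : 'I_d) : R := `| (-1) / (s - 1) * Kj j + c |.
Definition gjb (j : 'I_d) (b : bool) : R :=
  ((nat_of_bool b)%:R * s - (1 - (nat_of_bool b)%:R)) / (s - 1) * Kj j.

End WS.

From HB Require Import structures.
From mathcomp Require Import all_boot all_order all_algebra perm.
From mathcomp Require Import reals sequences exp.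
From mathcomp Require Import ring.
Import Order.TTheory GRing.Theory Num.Theory.
Local Open Scope ring_scope.

(* Every coordinate of an output takes one of two values, g_{j,1} + c (of
   absolute value t_j) when its bit is set and g_{j,0} + c (of absolute value
   f_j) otherwise, and every rank j with m_j > 0 together with every bit pattern
   occurs with positive probability.  Hence the largest output norm is
   d max(f_j, t_j), the largest distance between two outputs is d times the
   spread of the g_{j,b}, and both are attained by constant bit patterns.  The
   bits are flipped independently, so the expected norm is a sum over
   coordinates: the true candidate's bit is set with probability s/(s+1), each
   of the other d - 1 bits with probability 1/(s+1). *)

Lemma sparam_gt0 {R : realType} (eps : R) : 0 < sparam eps.
Proof. by rewrite sqrtr_gt0 expR_gt0. Qed.

Lemma sum_ffun_prod_sum (R : comPzRingType) (I J : finType)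
    (p h : I -> J -> R) :
  (forall k, \sum_b p k b = 1) ->
  \sum_(F : {ffun I -> J}) (\prod_k p k (F k)) * (\sum_k h k (F k)) =
  \sum_k \sum_b p k b * h k b.
Proof.
move=> p_sum1; under eq_bigr do rewrite mulr_sumr.
rewrite exchange_big /=; apply: eq_bigr => k _.
pose q i b := if i == k then p i b * h i b else p i b.
transitivity (\sum_(F : {ffun I -> J}) \prod_i q i (F i)).
  apply: eq_bigr => F _.
  rewrite (bigD1 k) //= [in RHS](bigD1 k) //= /q eqxx mulrAC; congr (_ * _).
  by apply: eq_bigr => i /negbTE ->.
(* Expanding the product of sums, every factor but the k-th is 1. *)
rewrite -bigA_distr_bigA /= (bigD1 k) //= /q eqxx.
by rewrite [X in _ * X]big1 ?mulr1 // => i /negbTE ->; rewrite p_sum1.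
Qed.

Lemma sumr_const_ord (R : nmodType) (d : nat) (x : R) :
  \sum_(k < d) x = x *+ d.
Proof. by rewrite sumr_const card_ord. Qed.

Section WeightedSampling.
Variables (R : realType) (d : nat) (eps : R) (w m : 'I_d -> R) (c : R).
Hypothesis m_ge0 : forall j, 0 <= m j.

Local Notation s := (sparam eps).
Local Notation out := (output eps w m c).
Local Notation t := (tj eps w m c).
Local Notation f := (fj eps w m c).
Local Notation g := (gjb eps w m c).

Let s1_gt0 : 0 < s + 1 := addr_gt0 (sparam_gt0 eps) ltr01.
Let s1_neq0 : s + 1 != 0 := lt0r_neq0 s1_gt0.

Lemma normr_output j Bt k : `|out j Bt k| = if Bt k then t j else f j.
Proof.
rewrite /output /tj /fj /Kj; case: (Bt k) => /=.
  by rewrite mulr1 addrK.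
by rewrite mulr0 sub0r.
Qed.

Lemma output_gjb j Bt k : out j Bt k = g j (Bt k) + c.
Proof.
rewrite /output /gjb /Kj; case: (Bt k) => /=.
  by rewrite mulr1 addrK mul1r subrr subr0.
by rewrite mulr0 sub0r mul0r subr0 sub0r.
Qed.

Lemma flipprob_gt0 b bt : 0 < flipprob eps b bt.
Proof. by rewrite /flipprob; case: ifP => _; rewrite divr_gt0 ?sparam_gt0. Qed.

Lemma flipprob_sum1 b : \sum_bt flipprob eps b bt = 1.
Proof. by rewrite big_bool /flipprob; case: b => /=; field. Qed.

Lemma outprob_gt0 pi j Bt : (0 < outprob eps m pi j Bt) = (0 < m j).
Proof.
by rewrite /outprob pmulr_lgt0 // prodr_gt0 // => k _; apply: flipprob_gt0.
Qed.

Lemma possible_outputP v :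
  possible_output eps w m c v <-> exists j Bt, 0 < m j /\ v = out j Bt.
Proof.
split=> [[pi [j [Bt []]]] | [j [Bt [mj_gt0 ->]]]].
  by rewrite outprob_gt0 => mj_gt0 ->; exists j, Bt.
by exists 1%g, j, Bt; rewrite outprob_gt0.
Qed.

Lemma l1_output j Bt : l1 (out j Bt) = \sum_k if Bt k then t j else f j.
Proof. by apply: eq_bigr => k _; rewrite normr_output. Qed.

Lemma l1_output_le j Bt : l1 (out j Bt) <= Num.max (f j) (t j) *+ d.
Proof.
rewrite l1_output -sumr_const_ord; apply: ler_sum => k _.
by case: (Bt k); rewrite le_max lexx ?orbT.
Qed.

Lemma l1_output_max j :
  l1 (out j [ffun=> f j < t j]) = Num.max (f j) (t j) *+ d.
Proof.
rewrite l1_output -sumr_const_ord; apply: eq_bigr => k _.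
by rewrite ffunE /Order.max; case: ltP.
Qed.

Lemma l1_sub_output j j' Bt Bt' :
  l1 (fun k => out j Bt k - out j' Bt' k) =
  \sum_k `|g j (Bt k) - g j' (Bt' k)|.
Proof.
by apply: eq_bigr => k _; rewrite !output_gjb opprD addrACA subrr addr0.
Qed.

Lemma expected_l1_output (pi : {perm 'I_d}) j :
  \sum_(Bt : {ffun 'I_d -> bool})
     (\prod_k flipprob eps (k == pi j) (Bt k)) * l1 (out j Bt) =
  ((s + d%:R - 1) * t j + (s * (d%:R - 1) + 1) * f j) / (s + 1).
Proof.
under eq_bigr do rewrite l1_output.
rewrite (sum_ffun_prod_sum _ _ _ (fun k => flipprob eps (k == pi j))
                              (fun _ b => if b then t j else f j)); last first.
  by move=> k; apply: flipprob_sum1.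
rewrite (bigD1 (pi j)) //=.
rewrite [X in _ + X](eq_bigr (fun=> 1 / (s + 1) * t j + s / (s + 1) * f j));
  last first.
  by move=> k /negbTE pij_neq; rewrite big_bool /flipprob pij_neq.
rewrite big_bool /flipprob eqxx sumr_const.
have card_neq : #|(fun k : 'I_d => k != pi j)| = d.-1.
  by rewrite -[in RHS](card_ord d) -(cardC1 (pi j)); apply: eq_card.
have d_pred : d%:R = d.-1%:R + 1 :> R.
  by rewrite natr1 prednK // (leq_ltn_trans _ (ltn_ord (pi j))).
by rewrite card_neq /= -[_ *+ d.-1]mulr_natr d_pred; field.
Qed.

Lemma riskMM_is_max n M :
  is_max (fun x => exists j, 0 < m j /\ x = Num.max (f j) (t j)) M ->
  is_max (riskMM_set eps w m c n) (d%:R / n%:R * M).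
Proof.
move=> [[j [mj_gt0 ->]] M_ub]; split.
  exists (out j [ffun=> f j < t j]); split.
    by apply/possible_outputP; exists j, [ffun=> f j < t j].
  by rewrite l1_output_max mulrAC mulr_natl.
move=> _ [_ [/possible_outputP [j' [Bt [mj'_gt0 ->]]] ->]].
rewrite mulrAC ler_wpM2r ?invr_ge0 ?ler0n // mulr_natl.
apply: le_trans (l1_output_le j' Bt) _; rewrite lerMn2r.
by rewrite M_ub ?orbT //; exists j'.
Qed.

Lemma riskEM_formula n (pi : {perm 'I_d}) :
  riskEM eps w m c n pi =
  (\sum_(j | 0 < m j)
     m j * ((s + d%:R - 1) * t j + (s * (d%:R - 1) + 1) * f j))
  / (n%:R * (s + 1)).
Proof.
rewrite /riskEM [in RHS]big_mkcond mulr_suml /=; apply: eq_bigr => j _.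
have [mj_gt0 | mj_le0] := ltP 0 (m j); last first.
  have mj0 : m j = 0 by apply/le_anti; rewrite mj_le0 m_ge0.
  by rewrite mul0r big1 // => Bt _; rewrite /outprob mj0 !mul0r.
transitivity (m j / n%:R * \sum_(Bt : {ffun 'I_d -> bool})
                (\prod_k flipprob eps (k == pi j) (Bt k)) * l1 (out j Bt)).
  by rewrite mulr_sumr; apply: eq_bigr => Bt _; rewrite /outprob; ring.
by rewrite expected_l1_output invfM; ring.
Qed.

Lemma riskDD_is_max gmax gmin :
  is_max (fun x => exists j b, 0 < m j /\ x = g j b) gmax ->
  is_min (fun x => exists j b, 0 < m j /\ x = g j b) gmin ->
  is_max (riskDD_set eps w m c) (d%:R * (gmax - gmin)).
Proof.
move=> [[j1 [b1 [mj1_gt0 ->]]] g_le] [[j2 [b2 [mj2_gt0 ->]]] g_ge]; split.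
  exists (out j1 [ffun=> b1]), (out j2 [ffun=> b2]).
  split; first by apply/possible_outputP; exists j1, [ffun=> b1].
  split; first by apply/possible_outputP; exists j2, [ffun=> b2].
  have g_spread : g j2 b2 <= g j1 b1 by apply: g_ge; exists j1, b1.
  rewrite l1_sub_output mulr_natl -sumr_const_ord; apply: eq_bigr => k _.
  by rewrite !ffunE ger0_norm // subr_ge0.
move=> _ [v [v' [/possible_outputP [j [Bt [mj_gt0 ->]]]
                 [/possible_outputP [j' [Bt' [mj'_gt0 ->]]] ->]]]].
rewrite l1_sub_output mulr_natl -sumr_const_ord; apply: ler_sum => k _.
have g_between i b : 0 < m i -> g j2 b2 <= g i b <= g j1 b1.
  by move=> mi_gt0; rewrite g_ge ?g_le //; exists i, b.
have /andP[ge1 le1] := g_between j (Bt k) mj_gt0.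
have /andP[ge2 le2] := g_between j' (Bt' k) mj'_gt0.
by rewrite ler_norml opprB !lerB.
Qed.

End WeightedSampling.

Theorem lemma10p1 (R : realType) (eps : R) (n d : nat) (w m : 'I_d -> R) (c : R) :
  0 < eps -> (1 <= n)%N ->
  (forall i j : 'I_d, (i <= j)%N -> w j <= w i) ->
  (forall j, 0 <= m j) -> \sum_j m j = 1 ->
  (* risk_MM *)
  (forall M : R,
     is_max (fun x => exists j, 0 < m j /\ x = Num.max (fj eps w m c j) (tj eps w m c j)) M ->
     is_max (riskMM_set eps w m c n) (d%:R / n%:R * M)) /\
  (* risk_EM, for every input vote *)
  (forall pi : {perm 'I_d},
     riskEM eps w m c n pi =
     (\sum_(j | 0 < m j)
        m j * ((sparam eps + d%:R - 1) * tj eps w m c j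
               + (sparam eps * (d%:R - 1) + 1) * fj eps w m c j))
     / (n%:R * (sparam eps + 1))) /\
  (* risk_DD *)
  (forall gmax gmin : R,
     is_max (fun x => exists j b, 0 < m j /\ x = gjb eps w m c j b) gmax ->
     is_min (fun x => exists j b, 0 < m j /\ x = gjb eps w m c j b) gmin ->
     is_max (riskDD_set eps w m c) (d%:R * (gmax - gmin))).
Proof.
move=> _ _ _ m_ge0 _; split; first exact: riskMM_is_max.
split=> [pi | gmax gmin]; first exact: riskEM_formula.
exact: riskDD_is_max.
Qed.
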